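(* Let $T$ be a compact metric space, let $\eta$ be a sample-continuous max-infinitely divisible process on $T$ with vertex function identically $0$ and exponent measure $\mu$, and $\Phi=\sum_{i=1}^N\delta_{\phi_i}$ a Poisson random measure on $\mathbb{C}_0$ with intensity $\mu$, defined on $(\Omega,\mathcal F,\mathbb P)$ with a measurable enumeration $(\phi_i)$ of its atoms, such that $\eta=\max(\Phi)$. Let $K\subset T$ be closed. Then $\Phi_K^+=\sum_{i=1}^N1_{\{\phi_i\not<_K\eta\}}\delta_{\phi_i}$ and $\Phi_K^-=\sum_{i=1}^N1_{\{\phi_i<_K\eta\}}\delta_{\phi_i}$ are measurable maps from $(\Omega,\mathcal F)$ to $(M_p(\mathbb{C}_0),\mathcal M_p)$.
   Context: $\mathbb{C}_0$ is the set of continuous $f:T\to[0,\infty)$ not identically zero (sup norm). $M_p(\mathbb{C}_0)$ is the set of point measures $\sum_{i\in I}\delta_{f_i}$ on $\mathbb{C}_0$ with $\{i:\|f_i\|>\varepsilon\}$ finite for all $\varepsilon>0$, and $\mathcal M_p$ is the $\sigma$-algebra generated by $M\mapsto M(A)$, $A$ Borel. $\max(\Phi)(s)=\max\{\phi_i(s)\}$ ($0$ if $N=0$). The vertex function is $h(t)=\sup\{x:\mathbb P(\eta(t)\ge x)=1\}$; $\mu$ is a Borel measure on $\mathbb{C}_0$ with $\mu(\{\|f\|>\varepsilon\})<\infty$ for all $\varepsilon>0$ and $\mathbb P[\eta(K_i)<x_i,i\le n]=\exp[-\mu(\cup_i\{f(K_i)\ge x_i\})]$. $f<_Kg$ means $f(s)<g(s)$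 for all $s\in K$, and $f\not<_Kg$ its negation. *)

From HB Require Import structures.
From mathcomp Require Import all_boot all_order all_algebra.
From mathcomp Require Import all_classical all_reals all_analysis measurable_realfun.
Set Implicit Arguments. Unset Strict Implicit. Unset Printing Implicit Defensive.
Import Order.TTheory GRing.Theory Num.Theory.
Import numFieldNormedType.Exports.
Local Open Scope classical_set_scope.
Local Open Scope ring_scope.

Section Defs.
Context {R : realType} {T : metricType R}.

Definition supnorm (f : T -> R) : R := sup (range (fun t => `|f t|)).

Definition supdist (f g : T -> R) : R := sup (range (fun t => `|f t - g t|)).

Definition supK (K : set T) (f : T -> R) : R := sup (f @` K).

Definition C0 : set (T -> R) :=
  [set f : T -> R | continuous f /\ (forall t, 0 <= f t) /\ exists t, f t != 0].

Definition C0open (U : set (T -> R)) : Prop :=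
  U `<=` C0 /\ forall f, U f ->
    exists2 e : R, 0 < e & forall g, C0 g -> supdist f g < e -> U g.

Definition C0Borel : set (set (T -> R)) := <<s C0, C0open >>.

Definition C0measure (mu : set (T -> R) -> \bar R) : Prop :=
  mu set0 = 0%E /\ (forall A, C0Borel A -> (0 <= mu A)%E) /\
  forall F : nat -> set (T -> R), (forall n, C0Borel (F n)) -> trivIset setT F ->
    (fun n => \sum_(0 <= i < n) mu (F i))%E @ \oo --> mu (\bigcup_n F n).

(* N : option nat encodes a value in {0,1,2,...} u {oo} (None = oo);
   ltN i N means i < N, i.e. index i is an atom index (0-based). *)
Definition ltN (i : nat) (N : option nat) : Prop :=
  match N with None => True | Some n => (i < n)%N end.

Definition ptmeas (N : option nat) (f : nat -> T -> R) (P : nat -> Prop)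
  : set (T -> R) -> \bar R :=
  fun A => (\sum_(i <oo) (\1_[set j | ltN j N /\ P j /\ A (f j)] i : R)%:E)%E.

(* M_p(C_0) : point measures sum_{i in I} delta_{f_i} on C_0 with
   finitely many atoms of norm > eps for every eps > 0
   (the index set is necessarily countable, so it is taken to be {i | i < N}) *)
Definition Mp : set (set (T -> R) -> \bar R) :=
  [set M | exists (N : option nat) (f : nat -> T -> R),
     (forall i, ltN i N -> C0 (f i)) /\
     (forall e : R, 0 < e -> finite_set [set i | ltN i N /\ e < supnorm (f i)]) /\
     M = ptmeas N f (fun _ => True)].

Definition Mp_sigma : set (set (set (T -> R) -> \bar R)) :=
  <<s Mp, [set Mp `&` [set M | B (M A)] | A in C0Borel & B in
            [set B : set (\bar R) | measurable B]] >>.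

Definition Mp_measurable {d} {Omega : measurableType d}
  (X : Omega -> set (T -> R) -> \bar R) : Prop :=
  (forall w, Mp (X w)) /\ forall S, Mp_sigma S -> measurable (X @^-1` S).

Definition ltK (K : set T) (f g : T -> R) : Prop := forall s, K s -> f s < g s.

Definition is_max_of (N : option nat) (a : nat -> R) (y : R) : Prop :=
  (N = Some 0%N -> y = 0) /\
  (N <> Some 0%N -> (exists2 i, ltN i N & a i = y) /\ forall i, ltN i N -> a i <= y).

Section Proba.
Context {d : measure_display} {Omega : measurableType d}.
Variable P : probability Omega R.

Definition vertex (eta : Omega -> T -> R) (t : T) : R :=
  sup [set x : R | P [set w | x <= eta w t] = 1%E].

Definition maxid_exponent (eta : Omega -> T -> R) (mu : set (T -> R) -> \bar R)
  : Prop :=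
  (forall t, measurable_fun setT (fun w => eta w t)) /\
  (forall w, continuous (eta w)) /\
  (forall t, vertex eta t = 0) /\
  C0measure mu /\
  (forall e : R, 0 < e -> (mu (C0 `&` [set f | (e < supnorm f)%R]) < +oo)%E) /\
  (forall (n : nat) (K : 'I_n -> set T) (x : 'I_n -> R),
      (forall i, closed (K i) /\ K i !=set0 /\ 0 < x i) ->
      P [set w | forall i, supK (K i) (eta w) < x i] =
      expeR (- mu (C0 `&` [set f | exists i, (x i <= supK (K i) f)%R]))%E).

Definition poisson_count (X : Omega -> \bar R) (m : \bar R) : Prop :=
  match m with
  | EFin m => forall k : nat, P [set w | X w = (k%:R)%:E] = (expR (- m) * m ^+ k / k`!%:R)%:E
  | _ => P [set w | X w = +oo%E] = 1%E
  end.

Definition poisson_rm (N : Omega -> option nat) (phi : nat -> Omega -> T -> R)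
  (mu : set (T -> R) -> \bar R) : Prop :=
  let Phi := fun w => ptmeas (N w) (fun i => phi i w) (fun _ => True) in
  (forall k, measurable [set w | N w = k]) /\
  (forall i w, ltN i (N w) -> C0 (phi i w)) /\
  (forall i A, C0Borel A -> measurable [set w | ltN i (N w) /\ A (phi i w)]) /\
  Mp_measurable Phi /\
  (forall A, C0Borel A -> poisson_count (fun w => Phi w A) (mu A)) /\
  (forall (n : nat) (A : 'I_n -> set (T -> R)) (B : 'I_n -> set (\bar R)),
     (forall i, C0Borel (A i) /\ measurable (B i)) ->
     (forall i j, i != j -> A i `&` A j = set0) ->
     P (\bigcap_(i in [set: 'I_n]) [set w | B i (Phi w (A i))]) =
     (\prod_(i < n) P [set w | B i (Phi w (A i))])%E).

End Proba.
End Defs.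

From HB Require Import structures.
From mathcomp Require Import all_boot all_order all_algebra.
From mathcomp Require Import all_classical all_reals all_analysis measurable_realfun.
From mathcomp Require Import finmap lra.
Import Order.TTheory GRing.Theory Num.Theory.
Import numFieldNormedType.Exports.
Local Open Scope classical_set_scope.
Local Open Scope ring_scope.

(** Both random measures are thinnings of [Phi], and a thinning of a point
  measure of [M_p(C_0)] is again one (re-enumerate the retained atoms), so by
  the definition of [M_p] it suffices that each count [Phi_K^+/-(A)] be
  measurable, i.e. that each event [{i < N, phi_i <_K eta}] be.  As [K] is
  compact and [phi_i], [eta] are continuous, [phi_i <_K eta] holds iff for
  some [m] the inequality [phi_i + 1/(m+1) <= eta] holds on a finite
  [1/(n+1)]-net of [K] for every [n]; this is a countable combination of
  events involving finitely many coordinates [phi_i(x)], [eta(x)], and the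
  coordinates are measurable because [f |-> f(x)] is Borel on [C_0]. *)

Lemma esum1_counting {R : realType} (S : set nat) :
  (\esum_(i in S) 1 = counting S :> \bar R)%E.
Proof.
rewrite /counting; case: ifPn => /asboolP Sfin; first exact: finite_card_sum.
rewrite -(infinite_card_dirac _ Sfin); apply: eq_esum => i Si.
by rewrite diracE mem_set.
Qed.

Lemma ltN_enumeration (S : set nat) :
  exists (N : option nat) (g : nat -> nat), set_bij [set j | ltN j N] S g.
Proof.
have [[n Sn]|Sinf] := pselect (finite_set S).
  by move/card_esym: Sn => /card_set_bijP[g gS]; exists (Some n), g.
have /card_set_bijP[g gS] : ([set: nat] #= S)%card.
  by apply: Cantor_Bernstein; [exact/infiniteP | exact: card_leT].
by exists None, g; rewrite (_ : [set j | ltN j None] = setT) //; apply/seteqP.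
Qed.

Section point_measures.
Context {R : realType} {T : metricType R}.
Implicit Types (N : option nat) (f : nat -> T -> R) (Q : nat -> Prop).

Lemma ptmeas_esum N f Q A :
  ptmeas N f Q A = (\esum_(i in [set i | ltN i N /\ Q i /\ A (f i)]) 1)%E.
Proof.
rewrite /ptmeas nneseries_esumT; last by move=> n; rewrite lee_fin indicE.
rewrite [in RHS]esum_mkcond; apply: eq_esum => i _ /=.
by rewrite indicE; case: (i \in _).
Qed.

Lemma Mp_ptmeas_thinning N f Q :
  (forall i, ltN i N -> C0 (f i)) ->
  (forall e : R, 0 < e -> finite_set [set i | ltN i N /\ e < supnorm (f i)]) ->
  Mp (ptmeas N f Q).
Proof.
move=> fC0 ffin; have [N' [g [gS gi gs]]] := ltN_enumeration [set i | ltN i N /\ Q i].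
have g_inj (X : set nat) : X `<=` [set j | ltN j N'] -> {in X &, injective g}.
  by move=> XN a b /set_mem/XN aN /set_mem/XN bN; apply: gi; exact: mem_set.
exists N', (f \o g); split; [|split].
- by move=> j /gS[iN _]; exact: fC0.
- move=> e e0; set X := [set j | ltN j N' /\ e < supnorm ((f \o g) j)].
  have XN : X `<=` [set j | ltN j N'] by move=> j [].
  rewrite -(eq_finite_set (inj_card_eq (g_inj X XN))).
  by apply: sub_finite_set (ffin e e0) => _ [j [/gS[? _] ?] <-].
- apply/funext => A; rewrite !ptmeas_esum; apply: (reindex_esum _ _ g); split.
  + by move=> j [/gS[? ?] [_ ?]]; do !split.
  + by apply: g_inj => j [].
  + move=> i [iN [Qi Ai]]; have [j jN ji] := gs i (conj iN Qi).
    by exists j => //; split => //; split => //=; rewrite ji.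
Qed.

Lemma Mp_ptmeas_large_finite N f :
  (forall i, ltN i N -> C0 (f i)) -> Mp (ptmeas N f (fun _ => True)) ->
  forall e : R, 0 < e -> finite_set [set i | ltN i N /\ e < supnorm (f i)].
Proof.
move=> fC0 [N' [f' [_ [f'fin Nf]]]] e e0.
pose large (h : T -> R) := C0 h /\ e < supnorm h.
have := congr1 (fun M => M large) Nf; rewrite /= !ptmeas_esum !esum1_counting.
rewrite {2}/counting asboolT; last first.
  by apply: sub_finite_set (f'fin e e0) => i [iN [_ []]].
rewrite /counting; case: ifPn => [/asboolP fin _|//].
apply: sub_finite_set fin => i [iN ie].
by split => //; split => //; split => //; exact: fC0.
Qed.

End point_measures.

Section Mp_measurability.
Context {R : realType} {T : metricType R} {d : measure_display}.
Context {Omega : measurableType d}.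

Lemma Mp_measurable_eval (X : Omega -> set (T -> R) -> \bar R) :
  (forall w, Mp (X w)) ->
  (forall A, C0Borel A -> measurable_fun setT (fun w => X w A)) ->
  Mp_measurable X.
Proof.
move=> XMp Xm; split => // S.
apply: (@smallest_sub _ (sigma_algebra Mp) _ [set S | measurable (X @^-1` S)]).
- split => /=.
  + by rewrite preimage_set0.
  + move=> A mA; rewrite (_ : X @^-1` (Mp `\` A) = ~` (X @^-1` A)).
      exact: measurableC.
    by apply/seteqP; split => w /=; [case|move=> nA; split => //; exact: XMp].
  + by move=> F mF; rewrite preimage_bigcup; exact: bigcupT_measurable.
- move=> _ [A AB [B mB <-]] /=; rewrite preimage_setI.
  rewrite (_ : X @^-1` Mp = setT); last by apply/seteqP; split => // w _; exact: XMp.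
  by rewrite setTI -[X in measurable X]setTI; exact: Xm.
Qed.

Lemma measurable_ptmeas (N : Omega -> option nat) (phi : nat -> Omega -> T -> R)
    (Q : Omega -> nat -> Prop) (A : set (T -> R)) :
  (forall i, measurable [set w | ltN i (N w) /\ Q w i /\ A (phi i w)]) ->
  measurable_fun setT (fun w => ptmeas (N w) (fun i => phi i w) (Q w) A).
Proof.
move=> mE; rewrite (_ : (fun w => _) = (fun w => \sum_(i <oo | i \in xpredT)
    ((\1_[set w | ltN i (N w) /\ Q w i /\ A (phi i w)] w : R)%:E))%E).
  apply: ge0_emeasurable_sum => [k x _ _|k _]; first by rewrite lee_fin.
  by apply/measurable_EFinP; exact: measurable_indic.
by apply/funext => w; apply: eq_eseriesr => i _; rewrite !indicE.
Qed.

Lemma Mp_measurable_thinning {N : Omega -> option nat}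
    {phi : nat -> Omega -> T -> R} {Q : Omega -> nat -> Prop} :
  (forall i A, C0Borel A -> measurable [set w | ltN i (N w) /\ A (phi i w)]) ->
  (forall i w, ltN i (N w) -> C0 (phi i w)) ->
  (forall w, Mp (ptmeas (N w) (fun i => phi i w) (fun _ => True))) ->
  (forall i, measurable [set w | ltN i (N w) /\ Q w i]) ->
  Mp_measurable (fun w => ptmeas (N w) (fun i => phi i w) (Q w)).
Proof.
move=> mA phiC0 PhiMp mQ; apply: Mp_measurable_eval.
  move=> w; apply: Mp_ptmeas_thinning => [i|]; first exact: phiC0.
  exact: Mp_ptmeas_large_finite (fun i => phiC0 i w) (PhiMp w).
move=> A AB; apply: measurable_ptmeas => i.
rewrite (_ : [set w | _] = [set w | ltN i (N w) /\ A (phi i w)] `&`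
                           [set w | ltN i (N w) /\ Q w i]).
  exact: measurableI (mA i A AB) (mQ i).
by apply/seteqP; split => w /=; [case=> ? [] ? ?|case=> -[? ?] [_ ?]].
Qed.

End Mp_measurability.

(* [compact_cover] is only stated for pointed spaces; any point will do. *)
Section cover_compact_pointed.
Context {T : topologicalType} (t0 : T).

Local Definition pointed_T : Type := T.
HB.instance Definition _ := Topological.on pointed_T.
HB.instance Definition _ := isPointed.Build pointed_T t0.

Lemma compact_cover_compact_pointed (K : set T) :
  compact K -> cover_compact (K : set pointed_T).
Proof. by rewrite -compact_cover. Qed.

End cover_compact_pointed.

Lemma compact_cover_compact {T : topologicalType} (K : set T) :
  compact K -> cover_compact K.
Proof.
have [->|/set0P[t0 _]] := eqVneq K set0; last exact: compact_cover_compact_pointed.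
by move=> _ I D f _ _; exists fset0.
Qed.

Lemma exists_natSinv_lt {R : archiRealFieldType} (r : R) :
  0 < r -> exists n : nat, n.+1%:R^-1 < r.
Proof.
by move=> r0; have [n _ /(_ n (leqnn n))] := near_infty_natSinv_lt (PosNum r0); exists n.
Qed.

Section compact_nets.
Context {R : realType} {T : metricType R}.

Definition finite_net (K : set T) (r : R) (D : {fset T}) : Prop :=
  [set` D] `<=` K /\ K `<=` \bigcup_(x in [set` D]) ball x r.

Lemma compact_finite_net (K : set T) (r : R) :
  compact K -> 0 < r -> exists D, finite_net K r D.
Proof.
move=> /compact_cover_compact Kc r0.
have [D DK cov] := Kc T K (fun x => (ball x r)°) (fun _ _ => open_interior _)
  (fun k Kk => ex_intro2 _ _ k Kk (nbhsx_ballx k r r0)).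
exists D; split=> [x /DK/set_mem //|k /cov[x xD /interior_subset kx]].
by exists x.
Qed.

Lemma compact_gt0_natSinv_le (K : set T) (g : T -> R) :
  compact K -> continuous g -> (forall s, K s -> 0 < g s) ->
  exists m : nat, forall s, K s -> m.+1%:R^-1 <= g s.
Proof.
move=> /compact_cover_compact Kc gc gK.
have cov : K `<=` \bigcup_(m in [set: nat]) [set s | m.+1%:R^-1 < g s]°.
  move=> s Ks; have [m gm] := exists_natSinv_lt _ (gK s Ks).
  by exists m => //; exact: (cvgr_gt _ (gc s) _ gm).
have [D _ covD] := Kc nat setT _ (fun _ _ => open_interior _) cov.
exists (\max_(i <- D) i) => s /covD[i iD /interior_subset /= gi].
apply/ltW/(le_lt_trans _ gi).
rewrite lef_pV2 ?posrE ?ltr0Sn // ler_nat ltnS.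
exact: (leq_bigmax_seq (F := id) _ iD).
Qed.

Lemma ltK_finite_nets (K : set T) (Ds : nat -> {fset T}) (f g : T -> R) :
  compact K -> (forall n, finite_net K n.+1%:R^-1 (Ds n)) ->
  continuous f -> continuous g ->
  ltK K f g <-> exists m : nat, forall n x, x \in Ds n -> f x + m.+1%:R^-1 <= g x.
Proof.
move=> Kc Dn fc gc; pose h t := g t - f t.
have hc : continuous h by move=> t; exact: (continuousB (gc t) (fc t)).
split=> [fg|[m hm] s Ks].
  have hK s : K s -> 0 < h s by move=> Ks; rewrite /h subr_gt0; exact: fg.
  have [m hm] := compact_gt0_natSinv_le _ _ Kc hc hK.
  by exists m => n x /(Dn n).1/hm; rewrite /h; move: (m.+1%:R^-1 : R) => c; lra.
rewrite ltNge; apply/negP => gfs; set c : R := m.+1%:R^-1.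
have c0 : 0 < c by rewrite invr_gt0 ltr0Sn.
have /nbhs_ballP[r /= r0 hsr] : \forall t \near s, h t < c.
  by apply: (cvgr_lt _ (hc s)); rewrite /h; lra.
have [n nr] := exists_natSinv_lt _ r0; have [x xD bsx] := (Dn n).2 s Ks.
have := hsr x (le_ball (ltW nr) (ball_sym bsx)); have := hm n x xD.
by rewrite /h -/c; lra.
Qed.

End compact_nets.

Section C0_Borel.
Context {R : realType} {T : metricType R}.
Hypothesis Tc : compact [set: T].

Lemma continuous_has_ubound (f : T -> R) : continuous f -> has_ubound (range f).
Proof.
move=> fc; apply: (@bounded_fun_has_ubound T R f).
have := compact_bounded (continuous_compact (continuous_subspaceT fc) Tc).
rewrite /bounded_near /globally /= => B; near=> M => x _.
by apply: (near B M) => //; exists x.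
Unshelve. all: by end_near.
Qed.

Lemma le_supdist (f g : T -> R) (x : T) : continuous f -> continuous g ->
  `|f x - g x| <= supdist f g.
Proof.
move=> fc gc; apply: ub_le_sup; last by exists x.
apply: continuous_has_ubound => t.
apply: (continuous_comp (f := fun t => f t - g t) (g := Num.norm)).
  exact: (continuousB (fc t) (gc t)).
exact: norm_continuous.
Qed.

Lemma C0Borel_lt (x : T) (c : R) : C0Borel [set f | C0 f /\ f x < c].
Proof.
apply: sub_sigma_algebra; split=> [f []//|f [f0 fx]].
exists (c - f x) => [|g g0 fg]; first by rewrite subr_gt0.
split=> //; have := le_supdist _ _ x f0.1 g0.1; rewrite distrC.
by move=> /(le_trans (ler_norm _)); move: fg; lra.
Qed.

End C0_Borel.

Lemma C0Borel_C0 {R : realType} {T : metricType R} : C0Borel (@C0 R T).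
Proof. by apply: sub_sigma_algebra; split=> // f f0; exists 1. Qed.

Section atom_events.
Context {R : realType} {T : metricType R} {d : measure_display}.
Context {Omega : measurableType d}.

Lemma measurable_fun_from_lt (D : set Omega) (a : Omega -> R) : measurable D ->
  (forall c, measurable (D `&` [set w | a w < c])) -> measurable_fun D a.
Proof.
move=> mD mlt; apply: (measurability _ (RGenInftyO.measurableE R)) => //.
move=> _ [_ [c ->] <-]; rewrite (_ : a @^-1` _ = [set w | a w < c]); first exact: mlt.
by apply/seteqP; split => w /=; rewrite in_itv.
Qed.

Lemma measurable_addr_le (D : set Omega) (a b : Omega -> R) (c : R) :
  measurable D -> measurable_fun D a -> measurable_fun D b ->
  measurable (D `&` [set w | a w + c <= b w]).
Proof.
move=> mD ma mb.
have := measurable_fun_ler (measurable_funD ma (measurable_cst c)) mb mD.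
by move=> /(_ [set true] ltac:(by [])).
Qed.

Context {N : Omega -> option nat} {phi : nat -> Omega -> T -> R}.
Hypothesis mphi :
  forall i A, C0Borel A -> measurable [set w | ltN i (N w) /\ A (phi i w)].
Hypothesis phiC0 : forall i w, ltN i (N w) -> C0 (phi i w).
Hypothesis Tc : compact [set: T].

Lemma measurable_atom_domain i : measurable [set w | ltN i (N w)].
Proof.
rewrite (_ : [set w | _] = [set w | ltN i (N w) /\ C0 (phi i w)]).
  exact: mphi C0Borel_C0.
by apply/seteqP; split => w /= => [iN|[]//]; split => //; exact: phiC0.
Qed.

Lemma measurable_atom_eval i x :
  measurable_fun [set w | ltN i (N w)] (fun w => phi i w x).
Proof.
apply: measurable_fun_from_lt => [|c]; first exact: measurable_atom_domain.
rewrite (_ : _ `&` _ = [set w | ltN i (N w) /\ [set f | C0 f /\ f x < c] (phi i w)]).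
  exact: mphi (C0Borel_lt Tc x c).
apply/seteqP; split => w /= [iN phix]; last by case: phix.
by split => //; split => //; exact: phiC0.
Qed.

Lemma measurable_atom_ltK (eta : Omega -> T -> R) (K : set T) :
  closed K -> (forall t, measurable_fun setT (fun w => eta w t)) ->
  (forall w, continuous (eta w)) ->
  forall i, measurable [set w | ltN i (N w) /\ ltK K (phi i w) (eta w)].
Proof.
move=> Kcl meta etac i; have Kc : compact K := subclosed_compact Kcl Tc (@subsetT _ K).
have /choice[Ds Dn] : forall n : nat, exists D, finite_net K n.+1%:R^-1 D.
  by move=> n; apply: compact_finite_net; rewrite ?invr_gt0 ?ltr0Sn.
set D := [set w | ltN i (N w)].
rewrite (_ : [set w | _] = \bigcup_m \bigcap_n (D `&` \bigcap_(x in [set` Ds n])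
    (D `&` [set w | phi i w x + m.+1%:R^-1 <= eta w x]))).
  apply: bigcupT_measurable => m; apply: bigcapT_measurable => n.
  apply: measurableI; first exact: measurable_atom_domain.
  apply: fin_bigcap_measurable => [|x _]; first exact: finite_fset.
  apply: measurable_addr_le; first exact: measurable_atom_domain.
    exact: measurable_atom_eval.
  exact: measurable_funS (meta x).
have ltK_nets w : ltN i (N w) -> ltK K (phi i w) (eta w) <->
    exists m : nat, forall n x, x \in Ds n -> phi i w x + m.+1%:R^-1 <= eta w x.
  by move=> iN; exact: ltK_finite_nets Kc Dn (phiC0 _ _ iN).1 (etac w).
apply/seteqP; split => w /=.
- move=> [iN /(ltK_nets _ iN)[m hm]]; exists m => // n _.
  by split => // x xD; split => //; exact: (hm n x xD).
- move=> [m _ hm]; have [iN _] := hm 0%N I; split => //.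
  by apply/(ltK_nets _ iN); exists m => n x xD; have [_ /(_ x xD)[]] := hm n I.
Qed.

End atom_events.

Theorem lemma3 (R : realType) (T : metricType R) (d : measure_display)
  (Omega : measurableType d) (P : probability Omega R)
  (eta : Omega -> T -> R) (mu : set (T -> R) -> \bar R)
  (N : Omega -> option nat) (phi : nat -> Omega -> T -> R) (K : set T) :
  compact [set: T] ->
  maxid_exponent P eta mu ->
  poisson_rm P N phi mu ->
  (forall w s, is_max_of (N w) (fun i => phi i w s) (eta w s)) ->
  closed K ->
  Mp_measurable (fun w => ptmeas (N w) (fun i => phi i w)
                            (fun i => ~ ltK K (phi i w) (eta w))) /\
  Mp_measurable (fun w => ptmeas (N w) (fun i => phi i w)
                            (fun i => ltK K (phi i w) (eta w))).
Proof.
move=> Tc [meta [etac _]] [_ [phiC0 [mphi [[PhiMp _] _]]]] _ Kcl.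
have mltK := measurable_atom_ltK mphi phiC0 Tc _ _ Kcl meta etac.
split; apply: (Mp_measurable_thinning mphi phiC0 PhiMp) => i; last exact: mltK.
rewrite (_ : [set w | _] = [set w | ltN i (N w)] `\`
                           [set w | ltN i (N w) /\ ltK K (phi i w) (eta w)]).
  exact: measurableD (measurable_atom_domain mphi phiC0 i) (mltK i).
apply/seteqP; split => w /= [iN nltK]; split => //; first by case.
by move=> ltKw; apply: nltK.
Qed.
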